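(* Let $G=(V,E)$ be a graph and $\mathfrak d_{|S_v}(V)=\bigcup_{v\in V}\mathfrak d_{|S_v}$. Then $\mathfrak d_{|S_v}(V)^*=\delta(G)^*$.
   Context: All graphs are finite, simple and undirected. For $G=(V,E)$ and $v\in V$, $E_v$ is the set of edges incident to $v$. For two distinct adjacent edges $e=(v,u)$, $f=(v,w)$, a square spanned by $e$ and $f$ is a $4$-cycle $v,u,x,w,v$ with $x\notin\{v,u,w\}$; it is chordless if neither $(u,w)$ nor $(v,x)$ is an edge. In a chordless square $v,u,x,w$, $(x,w)$ is opposite to $(v,u)$ and $(x,u)$ is opposite to $(v,w)$ (and vice versa). The relation $\delta(G)$ on $E$: $(e,f)\in\delta(G)$ iff (i) $e,f$ are distinct adjacent edges and it is not the case that $e$ and $f$ span exactly one square and that square is chordless; or (ii) $e,f$ are opposite edges of a chordless square; or (iii) $e=f$. For a relation $R$ on $E$, $R^*$ is its transitive closure, the finest equivalence relation on $E$ containing $R$. Define $\mathfrak d_v=((E_v\times E)\cup(E\times E_v))\cap\delta(G)$ and $\mathfrak d_v^*$ the finest equivalence relation on $E$ containing $\mathfrak d_v$. Let $F_v\subseteq E\setminus E_v$ be the set of edges that are the edges not incident to $v$ of some chordless square spanned by two edges $e,e'\in E_v$ with $(e,e')\notin\mathfrak d_v^*$. The partial star product $S_v$ is the subgraph of $G$ with edge set $E_v\cup F_v$ and vertex set the endpoints of these edges. $\mathfrak d_{|S_v}=\{(e,f)\in\mathfrak d_v^*: e,f\in E(S_v)\}$. *)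

From mathcomp Require Import all_boot.
Set Implicit Arguments. Unset Strict Implicit. Unset Printing Implicit Defensive.

Definition simple_graph (T : finType) (g : rel T) : Prop :=
  symmetric g /\ irreflexive g.

Definition is_edge (T : finType) (g : rel T) (A : {set T}) : Prop :=
  exists x y, g x y /\ A = [set x; y].

(* R^*: the finest equivalence relation on the edge set E containing R. *)
Inductive eqclos (T : finType) (g : rel T) (R : {set T} -> {set T} -> Prop)
  : {set T} -> {set T} -> Prop :=
| eqclos_base A B : R A B -> eqclos g R A B
| eqclos_refl A : is_edge g A -> eqclos g R A A
| eqclos_sym A B : eqclos g R A B -> eqclos g R B A
| eqclos_trans A B C : eqclos g R A B -> eqclos g R B C -> eqclos g R A C.

(* For e = (v,u), f = (v,w): v,u,x,w is a square spanned by e and f. *)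
Definition square (T : finType) (g : rel T) (v u w x : T) : Prop :=
  x \notin [:: v; u; w] /\ g u x /\ g x w.

Definition chordless (T : finType) (g : rel T) (v u w x : T) : Prop :=
  ~~ g u w /\ ~~ g v x.

Definition delta (T : finType) (g : rel T) (A B : {set T}) : Prop :=
  is_edge g A /\ is_edge g B /\
  ( A = B
  \/
     (exists v u w, g v u /\ g v w /\ u != w /\
        A = [set v; u] /\ B = [set v; w] /\
        ~ (exists x, square g v u w x /\ chordless g v u w x /\
                     forall y, square g v u w y -> y = x))
  \/
     (exists v u w x, g v u /\ g v w /\ u != w /\
        square g v u w x /\ chordless g v u w x /\
        ((A = [set v; u] /\ B = [set x; w]) \/
         (A = [set v; w] /\ B = [set x; u])))).

Definition incident (T : finType) (g : rel T) (v : T) (A : {set T}) : Prop :=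
  is_edge g A /\ v \in A.

Definition dv (T : finType) (g : rel T) (v : T) (A B : {set T}) : Prop :=
  (incident g v A \/ incident g v B) /\ delta g A B.

Definition Fv (T : finType) (g : rel T) (v : T) (A : {set T}) : Prop :=
  exists u w x, g v u /\ g v w /\ u != w /\
    square g v u w x /\ chordless g v u w x /\
    ~ eqclos g (dv g v) [set v; u] [set v; w] /\
    (A = [set u; x] \/ A = [set x; w]).

Definition Sv_edge (T : finType) (g : rel T) (v : T) (A : {set T}) : Prop :=
  incident g v A \/ Fv g v A.

Definition d_restr (T : finType) (g : rel T) (v : T) (A B : {set T}) : Prop :=
  eqclos g (dv g v) A B /\ Sv_edge g v A /\ Sv_edge g v B.

Definition d_restr_all (T : finType) (g : rel T) (A B : {set T}) : Prop :=
  exists v : T, d_restr g v A B.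

From mathcomp Require Import all_boot.
From Stdlib Require Import Classical.

(* Since R^* is the least equivalence containing R (eqclos_min), it suffices to show each relation is contained in the closure of the
   other.
   - d_{|S_v} lies in d_v^*, and d_v is a sub-relation of delta(G).
   - Conversely, reflexive pairs of delta are trivial, and a pair of
     adjacent edges (v,u),(v,w) in delta lies in d_v, hence in d_{|S_v}
     (adjacent_in_Sv).  The real work is a pair of opposite edges
     (v,u),(x,w) of a chordless square v,u,x,w (opposite_in_closure): if
     (v,u),(v,w) are not d_v^*-related, then (x,w) is in F_v and the pair
     lies in d_{|S_v}; symmetrically at the corner w; and if both corner
     pairs are related, (v,u) ~ (v,w) in d_{|S_v} and (w,v) ~ (w,x) in
     d_{|S_w} chain together. *)

Lemma eqclos_min (T : finType) (g : rel T) (R R' : {set T} -> {set T} -> Prop) :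
  (forall A B, R A B -> eqclos g R' A B) ->
  forall A B, eqclos g R A B -> eqclos g R' A B.
Proof.
move=> sub A B; elim=> {A B}.
- by move=> A B /sub.
- by move=> A A_edge; apply: eqclos_refl.
- by move=> A B _ IH; apply: eqclos_sym.
- by move=> A B C _ IHAB _ IHBC; apply: eqclos_trans IHAB IHBC.
Qed.

Lemma edge_pair (T : finType) (g : rel T) (a b : T) :
  g a b -> is_edge g [set a; b].
Proof. by move=> gab; exists a, b. Qed.

Lemma incident_pair (T : finType) (g : rel T) (v u : T) :
  g v u -> incident g v [set v; u].
Proof. by move=> gvu; split; [exact: edge_pair | rewrite set21]. Qed.

Lemma d_restr_all_sub_delta (T : finType) (g : rel T) (A B : {set T}) :
  d_restr_all g A B -> eqclos g (delta g) A B.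
Proof.
case=> v [rel_v _]; apply: eqclos_min rel_v => C D [_ dCD].
exact: eqclos_base.
Qed.

Section ChordlessSquare.
Context {T : finType} {g : rel T}.
Hypothesis hg : simple_graph g.
Context {v u w x : T}.
Hypotheses (gvu : g v u) (gvw : g v w) (neq_uw : u != w).
Hypotheses (sq : square g v u w x) (ch : chordless g v u w x).

Lemma square_swap : square g v w u x /\ chordless g v w u x.
Proof.
case: hg => symg _; case: sq => x_out [gux gxw]; case: ch => nguw ngvx.
split; last by split; [rewrite symg|].
split; last by split; rewrite symg.
by move: x_out; rewrite !inE; apply: contra => /or3P [->|->|->]; rewrite ?orbT.
Qed.

Lemma square_rotate :
  [/\ g w x, g w v, x != v, square g w x v u & chordless g w x v u].
Proof.
case: hg => symg irrg; case: sq => x_out [gux gxw]; case: ch => nguw ngvx.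
have neq_vx : v != x by apply: contraNneq x_out => ->; rewrite !inE eqxx.
split; rewrite 1?eq_sym //; try by rewrite symg.
- split; last by split; rewrite symg.
  rewrite !inE !negb_or neq_uw /=; apply/andP; split.
  + by apply/negP=> /eqP eq_ux; move: gux; rewrite eq_ux irrg.
  + by apply/negP=> /eqP eq_uv; move: gvu; rewrite eq_uv irrg.
- by split; rewrite symg.
Qed.

(* If (v,u),(v,w) are not d_v^*-related, then (x,w) belongs to F_v and the
   opposite pair (v,u),(x,w), which is in d_v, lies in d_{|S_v}. *)
Lemma opposite_in_Sv :
  ~ eqclos g (dv g v) [set v; u] [set v; w] ->
  d_restr g v [set v; u] [set x; w].
Proof.
move=> not_rel; case: (sq) => _ [gux gxw].
have opp : delta g [set v; u] [set x; w].
  split; first exact: edge_pair; split; first exact: edge_pair.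
  by right; right; exists v, u, w, x; do 5!split=> //; left.
split; first by apply: eqclos_base; split=> //; left; exact: incident_pair.
split; first by left; exact: incident_pair.
by right; exists u, w, x; do 6!split=> //; right.
Qed.

End ChordlessSquare.

Lemma adjacent_in_Sv (T : finType) (g : rel T) (v u w : T) :
  g v u -> g v w -> eqclos g (dv g v) [set v; u] [set v; w] ->
  d_restr g v [set v; u] [set v; w].
Proof. by move=> gvu gvw rel_v; split=> //; split; left; exact: incident_pair. Qed.

Lemma opposite_in_closure (T : finType) (g : rel T) (hg : simple_graph g)
    (v u w x : T) :
  g v u -> g v w -> u != w -> square g v u w x -> chordless g v u w x ->
  eqclos g (d_restr_all g) [set v; u] [set x; w].
Proof.
move=> gvu gvw neq_uw sq ch.
have [gwx gwv neq_xv sq_w ch_w] := square_rotate hg gvu gvw neq_uw sq ch.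
have comm (a b : T) : [set a; b] = [set b; a] by rewrite setUC.
have [rel_v|] := classic (eqclos g (dv g v) [set v; u] [set v; w]); last first.
  by move=> not_rel_v; apply: eqclos_base; exists v; exact: opposite_in_Sv.
have [rel_w|] := classic (eqclos g (dv g w) [set w; x] [set w; v]); last first.
  move=> /(opposite_in_Sv gwx gwv neq_xv sq_w ch_w) Sw.
  apply: eqclos_sym; apply: eqclos_base; exists w.
  by rewrite [[set x; w]]comm [[set v; u]]comm.
apply: (@eqclos_trans _ _ _ _ [set v; w]).
  by apply: eqclos_base; exists v; exact: adjacent_in_Sv.
apply: eqclos_sym; apply: eqclos_base; exists w.
by rewrite [[set x; w]]comm [[set v; w]]comm; exact: adjacent_in_Sv.
Qed.

Lemma delta_sub_d_restr_all (T : finType) (g : rel T) (hg : simple_graph g)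
    (A B : {set T}) :
  delta g A B -> eqclos g (d_restr_all g) A B.
Proof.
move=> dAB; case: (dAB) => A_edge [B_edge [<-|[adj|opp]]].
- exact: eqclos_refl.
- case: adj => v [u [w [gvu [gvw [_ [eA [eB _]]]]]]]; subst A B.
  apply: eqclos_base; exists v; apply: adjacent_in_Sv => //.
  by apply: eqclos_base; split=> //; left; exact: incident_pair.
- case: opp => v [u [w [x [gvu [gvw [neq_uw [sq [ch [[-> ->]|[-> ->]]]]]]]]]].
    exact: opposite_in_closure.
  have [sq' ch'] := square_swap hg sq ch.
  by apply: opposite_in_closure; rewrite 1?eq_sym.
Qed.

Theorem theorem3p9 (T : finType) (g : rel T) (hg : simple_graph g) :
  forall A B : {set T},
    eqclos g (d_restr_all g) A B <-> eqclos g (delta g) A B.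
Proof.
move=> A B; split; apply: eqclos_min => C D.
- exact: d_restr_all_sub_delta.
- exact: delta_sub_d_restr_all.
Qed.
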